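(* Let $X\subset\Gamma$ be finite and such that $\mathbb N\ni n\mapsto|\underline X_n\setminus\underline X_{n-1}|$ is non-increasing. Let $R\in\mathbb N$, $\rho=\lfloor R/2\rfloor$, and $\Lambda\subset\Gamma$ finite with $\overline X^R\subset\Lambda$. Define $K(t):=-\sum_{Z\subset\Lambda:\ Z\cap X\ne\emptyset,\ Z\cap(\Lambda\setminus X)\neq\emptyset}\Psi(Z,t)$. Then $$\sup_{r\in[-T,T]}\|K(r)+S(R,r)\|\le 2|\partial X|\,\|\Psi\|_\xi\,\|F\|\,\zeta(\rho).$$
   Context: Setting. $\Gamma$ is a countable set with a graph distance $d(x,y)\ge 0$ (integer-valued). $F:[0,\infty)\to(0,\infty)$ satisfies $\|F\|:=\sup_{x\in\Gamma}\sum_{y\in\Gamma}F(d(x,y))<\infty$ and $C_F:=\sup_{x,z}\sum_{y}\frac{F(d(x,y))F(d(y,z))}{F(d(x,z))}<\infty$. $\xi:[0,\infty)\to(0,\infty)$ is non-increasing, satisfies $\xi(a+b)\ge\xi(a)\xi(b)$, and $\lim_{r\to\infty}\xi(r)r^n=0$ for all $n\in\mathbb N$. Put $F_\xi(r):=F(r)\xi(r)$ and $\zeta(R):=\sum_{r\in\mathbb N,\ r\ge R+1}\xi(r)$ for $R\in\mathbb N\cup\{0\}$. Each $x\in\Gamma$ carries a finite-dimensional Hilbert space $\mathcal H_x$; for finite $\Lambda$, $\mathcal A_\Lambda=\mathcal B(\bigotimes_{x\in\Lambda}\mathcal H_x)$, embedded in $\mathcal A_{\Lambda'}$ for $\Lambda\subset\Lambda'$.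 Fix $T>0$. An interaction assigns to each finite $Z\subset\Gamma$ and $t\in[-T,T]$ a self-adjoint $\Psi(Z,t)\in\mathcal A_Z$, continuous in $t$, with $\|\Psi\|_\xi:=\sup_{x,y\in\Gamma}\frac{1}{F_\xi(d(x,y))}\sum_{Z\ni x,y}\sup_{t\in[-T,T]}\|\Psi(Z,t)\|<\infty$. Sets. For finite $X$: $\partial X:=\{x\in X: d(x,\Gamma\setminus X)=1\}$; for $R\in\mathbb N\cup\{0\}$, $\overline X^R:=\{x\in\Gamma:d(x,X)\le R\}$, $\underline X_R:=\{x\in\Gamma: d(x,\Gamma\setminus X)\le R\}$, $\partial_RX:=\overline X^R\cap\underline X_R$. Surface energy. For $R\in\mathbb N$, $\rho=\lfloor R/2\rfloor$, finite $\Lambda\supset\overline X^R$: $M_R:=\{Y\subset\partial_{\rho}X: Y\cap X\ne\emptyset,\ Y\cap(\Lambda\setminus X)\ne\emptyset\}$ and $S(R,t):=\sum_{Z\in M_R}\Psi(Z,t)$. *)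

From Stdlib Require Import Reals Lra Lia List ClassicalEpsilon.
Open Scope R_scope.

(* ---------- abstract normed abelian group (model for the quasi-local algebra) ---------- *)
Record NormedAbGroup := {
  ng_car :> Type;
  ng_zero : ng_car;
  ng_add : ng_car -> ng_car -> ng_car;
  ng_opp : ng_car -> ng_car;
  ng_norm : ng_car -> R;
  ng_addA : forall a b c, ng_add a (ng_add b c) = ng_add (ng_add a b) c;
  ng_addC : forall a b, ng_add a b = ng_add b a;
  ng_add0 : forall a, ng_add ng_zero a = a;
  ng_addN : forall a, ng_add (ng_opp a) a = ng_zero;
  ng_norm_ge0 : forall a, 0 <= ng_norm a;
  ng_norm_eq0 : forall a, ng_norm a = 0 -> a = ng_zero;
  ng_norm_tri : forall a b, ng_norm (ng_add a b) <= ng_norm a + ng_norm b;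
  ng_normN : forall a, ng_norm (ng_opp a) = ng_norm a
}.

Definition ng_sum (A : NormedAbGroup) (l : list A) : A :=
  fold_right (ng_add A) (ng_zero A) l.

Definition Rsum (l : list R) : R := fold_right Rplus 0 l.

Inductive walk {G : Type} (E : G -> G -> Prop) : G -> G -> nat -> Prop :=
| walk0 : forall x, walk E x x 0
| walkS : forall x y z n, E x y -> walk E y z n -> walk E x z (S n).

Definition is_graph_distance {G : Type} (E : G -> G -> Prop) (d : G -> G -> nat) : Prop :=
  (forall x y, E x y -> E y x) /\ (forall x, ~ E x x) /\
  (forall x y, walk E x y (d x y) /\ (forall n, walk E x y n -> (d x y <= n)%nat)).

Definition countable (G : Type) : Prop :=
  exists f : G -> nat, forall x y, f x = f y -> x = y.

Definition pred_of {G : Type} (l : list G) : G -> Prop := fun x => In x l.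

Definition has_card {G : Type} (S : G -> Prop) (n : nat) : Prop :=
  exists l, NoDup l /\ (forall x, In x l <-> S x) /\ length l = n.

Definition dist_le {G : Type} (d : G -> G -> nat) (x : G) (S : G -> Prop) (n : nat) : Prop :=
  exists y, S y /\ (d x y <= n)%nat.

Definition compl {G : Type} (X : G -> Prop) : G -> Prop := fun x => ~ X x.

Definition bdry {G : Type} (d : G -> G -> nat) (X : G -> Prop) : G -> Prop :=
  fun x => X x /\ dist_le d x (compl X) 1 /\ ~ dist_le d x (compl X) 0.

Definition outer {G : Type} (d : G -> G -> nat) (X : G -> Prop) (R : nat) : G -> Prop :=
  fun x => dist_le d x X R.

Definition inner {G : Type} (d : G -> G -> nat) (X : G -> Prop) (R : nat) : G -> Prop :=
  fun x => dist_le d x (compl X) R.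

Definition bdryR {G : Type} (d : G -> G -> nat) (X : G -> Prop) (R : nat) : G -> Prop :=
  fun x => outer d X R x /\ inner d X R x.

(* \underline X_n \ \underline X_{n-1}  (used for n >= 1) *)
Definition layer {G : Type} (d : G -> G -> nat) (X : G -> Prop) (n : nat) : G -> Prop :=
  fun x => inner d X n x /\ ~ inner d X (n - 1) x.

Fixpoint sublists {G : Type} (l : list G) : list (list G) :=
  match l with
  | nil => nil :: nil
  | a :: l' => sublists l' ++ map (cons a) (sublists l')
  end.

Definition decP (P : Prop) : bool :=
  if excluded_middle_informative P then true else false.

Definition sum_subsets (A : NormedAbGroup) {G : Type} (lam : list G)
  (P : (G -> Prop) -> Prop) (f : (G -> Prop) -> A) : A :=
  ng_sum A (map (fun s => f (pred_of s))
                (filter (fun s => decP (P (pred_of s))) (sublists lam))).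

(* partial sums  sum_{y in l} F(d(x,y)),  whose sup is ||F|| *)
Definition F_sums {G : Type} (d : G -> G -> nat) (F : R -> R) : R -> Prop :=
  fun s => exists x (l : list G), NoDup l /\ s = Rsum (map (fun y => F (INR (d x y))) l).

Definition CF_sums {G : Type} (d : G -> G -> nat) (F : R -> R) : R -> Prop :=
  fun s => exists x z (l : list G), NoDup l /\
    s = Rsum (map (fun y => F (INR (d x y)) * F (INR (d y z)) / F (INR (d x z))) l).

Definition Psi_vals (A : NormedAbGroup) {G : Type} (T : R) (Psi : (G -> Prop) -> R -> A)
  (Z : G -> Prop) : R -> Prop :=
  fun s => exists t, -T <= t <= T /\ s = ng_norm A (Psi Z t).

(* partial sums  (1/F_xi(d(x,y))) sum_{Z in L} sup_t ||Psi(Z,t)||  over finite families L of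
   distinct finite sets Z containing x and y; psisup Z = sup_t ||Psi(Z,t)|| *)
Definition Psi_sums {G : Type} (d : G -> G -> nat) (F xi : R -> R) (psisup : (G -> Prop) -> R)
  : R -> Prop :=
  fun s => exists x y (L : list (list G)),
    NoDup (map pred_of L) /\ (forall l, In l L -> In x l /\ In y l) /\
    s = Rsum (map (fun l => psisup (pred_of l)) L) / (F (INR (d x y)) * xi (INR (d x y))).

(* K(r) + S(r) is minus the sum of Ψ(Z, r) over the crossing sets Z ⊂ Λ that
   are not contained in the collar ∂_ρX.  Such a Z contains a ∈ X and b ∉ X
   with either d(a, Γ \ X) > ρ (a "deep" pair) or d(b, X) > ρ (a "far" pair),
   and the sum of ‖Ψ(Z)‖ over all Z ∋ a, b is at most ‖Ψ‖_ξ F(d(a,b)) ξ(d(a,b)).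
   If a lies in the layer X_m \ X_(m-1) of points at distance m from Γ \ X,
   every partner b of a deep pair has d(a,b) ≥ m ≥ ρ + 1, and every partner of
   a far pair has d(a,b) ≥ m + ρ.  Summing F(d(a,b)) over b gives at most ‖F‖,
   so each kind of pair contributes at most
   ‖Ψ‖_ξ ‖F‖ Σ_k |X_(k+1) \ X_k| ξ(k+ρ+1) ≤ ‖Ψ‖_ξ ‖F‖ |∂X| ζ(ρ),
   because no layer is larger than the first one, ∂X. *)

From Stdlib Require Import Reals List Lra Lia ClassicalEpsilon Classical Bool Wf_nat FinFun.
Open Scope R_scope.

Definition sumR {B : Type} (l : list B) (f : B -> R) : R := Rsum (map f l).

Definition indic (P : Prop) (x : R) : R :=
  if excluded_middle_informative P then x else 0.

Lemma indic_true (P : Prop) x : P -> indic P x = x.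
Proof. intro H; unfold indic; destruct excluded_middle_informative; tauto. Qed.

Lemma indic_false (P : Prop) x : ~ P -> indic P x = 0.
Proof. intro H; unfold indic; destruct excluded_middle_informative; tauto. Qed.

Lemma indic_ge0 P x : 0 <= x -> 0 <= indic P x.
Proof. unfold indic; destruct excluded_middle_informative; lra. Qed.

Lemma indic_le P x y : x <= y -> 0 <= y -> indic P x <= indic P y.
Proof. unfold indic; destruct excluded_middle_informative; lra. Qed.

Lemma indic_scal P c x : indic P (c * x) = c * indic P x.
Proof. unfold indic; destruct excluded_middle_informative; lra. Qed.

Lemma indic_or P Q y : 0 <= y -> indic (P \/ Q) y <= indic P y + indic Q y.
Proof.
  intro. unfold indic; repeat destruct excluded_middle_informative; tauto || lra.
Qed.

Lemma decP_iff P : decP P = true <-> P.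
Proof.
  unfold decP; destruct excluded_middle_informative; split; intros; auto; discriminate.
Qed.

Lemma sumR_nil {B : Type} (f : B -> R) : sumR nil f = 0.
Proof. reflexivity. Qed.

Lemma sumR_cons {B : Type} (a : B) l f : sumR (a :: l) f = f a + sumR l f.
Proof. reflexivity. Qed.

Lemma sumR_le {B : Type} (l : list B) f g :
  (forall x, In x l -> f x <= g x) -> sumR l f <= sumR l g.
Proof.
  induction l as [|a l IH]; intro H; rewrite ?sumR_nil, ?sumR_cons; [lra|].
  assert (f a <= g a) by (apply H; left; auto).
  assert (sumR l f <= sumR l g) by (apply IH; intros; apply H; right; auto).
  lra.
Qed.

Lemma sumR_ge0 {B : Type} (l : list B) f : (forall x, In x l -> 0 <= f x) -> 0 <= sumR l f.
Proof.
  induction l as [|a l IH]; intro H; rewrite ?sumR_nil, ?sumR_cons; [lra|].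
  assert (0 <= f a) by (apply H; left; auto).
  assert (0 <= sumR l f) by (apply IH; intros; apply H; right; auto).
  lra.
Qed.

Lemma sumR_zero {B : Type} (l : list B) f : (forall x, In x l -> f x = 0) -> sumR l f = 0.
Proof.
  induction l as [|a l IH]; intro H; rewrite ?sumR_nil, ?sumR_cons; [reflexivity|].
  rewrite (H a), IH; [lra| |left; auto]. intros; apply H; right; auto.
Qed.

Lemma sumR_ge_term {B : Type} (l : list B) f x :
  (forall y, In y l -> 0 <= f y) -> In x l -> f x <= sumR l f.
Proof.
  induction l as [|a l IH]; intros H Hx; [destruct Hx|]. rewrite sumR_cons.
  assert (0 <= f a) by (apply H; left; auto).
  assert (0 <= sumR l f) by (apply sumR_ge0; intros; apply H; right; auto).
  destruct Hx as [<-|Hx]; [lra|].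
  assert (f x <= sumR l f) by (apply IH; auto; intros; apply H; right; auto).
  lra.
Qed.

Lemma sumR_ext {B : Type} (l : list B) f g : (forall x, In x l -> f x = g x) -> sumR l f = sumR l g.
Proof. intro H. apply Rle_antisym; apply sumR_le; intros; rewrite H; auto; lra. Qed.

Lemma sumR_plus {B : Type} (l : list B) f g : sumR l (fun x => f x + g x) = sumR l f + sumR l g.
Proof. induction l; rewrite ?sumR_nil, ?sumR_cons; [lra|]. rewrite IHl; lra. Qed.

Lemma sumR_scal {B : Type} (l : list B) c f : sumR l (fun x => c * f x) = c * sumR l f.
Proof. induction l; rewrite ?sumR_nil, ?sumR_cons; [lra|]. rewrite IHl; lra. Qed.

Lemma sumR_indic {B : Type} (l : list B) P f : sumR l (fun x => indic P (f x)) = indic P (sumR l f).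
Proof.
  unfold indic; destruct excluded_middle_informative; [reflexivity|].
  induction l; rewrite ?sumR_nil, ?sumR_cons; [lra|]. rewrite IHl; lra.
Qed.

Lemma sumR_swap {B C : Type} (l1 : list B) (l2 : list C) f :
  sumR l1 (fun a => sumR l2 (fun b => f a b)) = sumR l2 (fun b => sumR l1 (fun a => f a b)).
Proof.
  induction l1; rewrite ?sumR_nil, ?sumR_cons.
  - symmetry. apply sumR_zero. intros; apply sumR_nil.
  - rewrite IHl1, <- sumR_plus. reflexivity.
Qed.

Lemma sumR2_indic_scal {B : Type} (l : list B) (T : B -> B -> Prop) c f :
  sumR l (fun a => sumR l (fun b => indic (T a b) (c * f a b))) =
  c * sumR l (fun a => sumR l (fun b => indic (T a b) (f a b))).
Proof.
  rewrite <- sumR_scal. apply sumR_ext. intros a _.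
  rewrite <- sumR_scal. apply sumR_ext. intros b _. apply indic_scal.
Qed.

Lemma sumR_filter {B : Type} (l : list B) (P : B -> Prop) f :
  sumR (filter (fun x => decP (P x)) l) f = sumR l (fun x => indic (P x) (f x)).
Proof.
  induction l as [|a l IH]; [reflexivity|]. rewrite sumR_cons. simpl filter.
  unfold decP at 1, indic at 1. destruct excluded_middle_informative;
    rewrite ?sumR_cons, IH; lra.
Qed.

Lemma sumR_indic_one {B : Type} (l : list B) (P : B -> Prop) :
  sumR l (fun x => indic (P x) 1) = INR (length (filter (fun x => decP (P x)) l)).
Proof.
  induction l as [|a l IH]; [reflexivity|]. rewrite sumR_cons, IH.
  unfold indic, decP. simpl filter.
  destruct excluded_middle_informative; [|lra]. simpl length. rewrite S_INR; lra.
Qed.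

Lemma sumR_seq (f : nat -> R) N : sumR (seq 0 (S N)) f = sum_f_R0 f N.
Proof.
  induction N as [|N IH]; [unfold sumR; simpl; lra|].
  rewrite seq_S. unfold sumR in *. rewrite map_app. simpl sum_f_R0. rewrite <- IH.
  generalize (map f (seq 0 (S N))). intro l.
  induction l; simpl in *; [lra|]. rewrite IHl; lra.
Qed.

Lemma sumR_le_by_pair_cover {B C : Type} (l : list B) (m : list C)
  (bad : B -> Prop) (mem : C -> B -> Prop) (T1 T2 : C -> C -> Prop)
  (g : B -> R) (w : C -> C -> R) :
  (forall s, 0 <= g s) -> (forall a b, 0 <= w a b) ->
  (forall s, In s l -> bad s -> exists a b,
     In a m /\ In b m /\ mem a s /\ mem b s /\ (T1 a b \/ T2 a b)) ->
  (forall a b, sumR l (fun s => indic (bad s /\ mem a s /\ mem b s) (g s)) <= w a b) ->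
  sumR l (fun s => indic (bad s) (g s)) <=
  sumR m (fun a => sumR m (fun b => indic (T1 a b) (w a b))) +
  sumR m (fun a => sumR m (fun b => indic (T2 a b) (w a b))).
Proof.
  intros Hg Hw Hcov Hpair.
  set (W := fun a b s => indic (T1 a b \/ T2 a b) (indic (bad s /\ mem a s /\ mem b s) (g s))).
  assert (W0 : forall a b s, 0 <= W a b s) by (intros; apply indic_ge0, indic_ge0, Hg).
  apply Rle_trans with (sumR l (fun s => sumR m (fun a => sumR m (fun b => W a b s)))).
  { apply sumR_le. intros s Hs. destruct (classic (bad s)) as [Hb|Hb].
    - rewrite indic_true by auto.
      destruct (Hcov s Hs Hb) as (a & b & Ha & Hb' & Sa & Sb & Tab).
      apply Rle_trans with (W a b s).
      + unfold W. rewrite !indic_true by auto. lra.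
      + apply Rle_trans with (sumR m (fun b => W a b s)).
        * apply (sumR_ge_term m (fun b => W a b s)); auto.
        * apply (sumR_ge_term m (fun a => sumR m (fun b => W a b s))); auto.
          intros; apply sumR_ge0; auto.
    - rewrite indic_false by auto. apply sumR_ge0. intros; apply sumR_ge0; auto. }
  rewrite sumR_swap, <- !sumR_plus. apply sumR_le. intros a _.
  rewrite sumR_swap, <- !sumR_plus. apply sumR_le. intros b _.
  unfold W. rewrite sumR_indic.
  eapply Rle_trans; [apply indic_le; [apply Hpair|eapply Rle_trans; [|apply Hpair]]|].
  - apply sumR_ge0; intros; apply indic_ge0, Hg.
  - apply indic_or, Hw.
Qed.

Section NormedSums.
Variable A : NormedAbGroup.

Lemma ng_addr0 (a : A) : ng_add A a (ng_zero A) = a.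
Proof. rewrite ng_addC; apply ng_add0. Qed.

Lemma ng_opp_unique (x y : A) : ng_add A x y = ng_zero A -> x = ng_opp A y.
Proof.
  intro H.
  rewrite <- (ng_addr0 x), <- (ng_addN A y), (ng_addC A (ng_opp A y) y), ng_addA, H, ng_add0.
  reflexivity.
Qed.

Lemma ng_opp_add (a b : A) : ng_opp A (ng_add A a b) = ng_add A (ng_opp A a) (ng_opp A b).
Proof.
  symmetry. apply ng_opp_unique.
  rewrite <- ng_addA, (ng_addA A (ng_opp A b) a b), (ng_addC A (ng_opp A b) a), <- ng_addA,
    ng_addN, ng_addr0, ng_addN.
  reflexivity.
Qed.

(* The axioms of [NormedAbGroup] do not force [‖0‖ = 0]; continuity of any
   map into [A] does. *)
Lemma ng_norm0_of_continuous (f : R -> A) (D : R -> Prop) t : D t ->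
  (forall eps, 0 < eps -> exists delta, 0 < delta /\
     forall s, D s -> Rabs (s - t) < delta ->
       ng_norm A (ng_add A (f s) (ng_opp A (f t))) < eps) ->
  ng_norm A (ng_zero A) = 0.
Proof.
  intros Dt Hcont. apply Rle_antisym; [|apply ng_norm_ge0].
  apply Rnot_lt_le. intro Hpos.
  destruct (Hcont _ Hpos) as (delta & Hdelta & Hc).
  specialize (Hc t Dt ltac:(rewrite Rminus_diag, Rabs_R0; lra)).
  rewrite ng_addC, ng_addN in Hc. lra.
Qed.

Hypothesis norm0 : ng_norm A (ng_zero A) = 0.

Lemma ng_norm_sum_le {B : Type} (h : B -> A) l :
  ng_norm A (ng_sum A (map h l)) <= sumR l (fun x => ng_norm A (h x)).
Proof.
  induction l as [|a l IH]; simpl; [rewrite norm0, sumR_nil; lra|].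
  rewrite sumR_cons. eapply Rle_trans; [apply ng_norm_tri|lra].
Qed.

Lemma ng_sum_filter_split {B : Type} (h : B -> A) (p q : B -> bool) l :
  ng_sum A (map h (filter p l)) =
  ng_add A (ng_sum A (map h (filter (fun x => p x && q x) l)))
           (ng_sum A (map h (filter (fun x => p x && negb (q x)) l))).
Proof.
  induction l as [|a l IH]; simpl; [rewrite ng_add0; reflexivity|].
  destruct (p a), (q a); simpl; rewrite IH; unfold ng_sum; simpl; fold (ng_sum A);
    try reflexivity.
  - rewrite ng_addA; reflexivity.
  - rewrite !ng_addA, (ng_addC A (h a)). reflexivity.
Qed.

Lemma ng_norm_sum_diff_le {B : Type} (h : B -> A) (P Q : B -> Prop) l :
  ng_norm A (ng_add A (ng_opp A (ng_sum A (map h (filter (fun x => decP (P x)) l))))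
                      (ng_sum A (map h (filter (fun x => decP (Q x /\ P x)) l))))
  <= sumR l (fun x => indic (P x /\ ~ Q x) (ng_norm A (h x))).
Proof.
  rewrite (ng_sum_filter_split h _ (fun x => decP (Q x))).
  replace (filter (fun x => decP (Q x /\ P x)) l)
    with (filter (fun x => decP (P x) && decP (Q x)) l).
  2:{ apply filter_ext. intro x. unfold decP.
      repeat destruct excluded_middle_informative; simpl; tauto. }
  rewrite ng_opp_add, (ng_addC A (ng_opp A _)), <- ng_addA, ng_addN, ng_addr0, ng_normN.
  eapply Rle_trans; [apply ng_norm_sum_le|].
  replace (filter (fun x => decP (P x) && negb (decP (Q x))) l)
    with (filter (fun x => decP (P x /\ ~ Q x)) l).
  2:{ apply filter_ext. intro x. unfold decP.
      repeat destruct excluded_middle_informative; simpl; tauto. }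
  rewrite sumR_filter. apply Rle_refl.
Qed.

End NormedSums.

Lemma sublists_incl {G : Type} (l s : list G) : In s (sublists l) -> incl s l.
Proof.
  revert s; induction l as [|a l IH]; simpl; intros s H.
  - destruct H as [<-|[]]. intros x [].
  - apply in_app_or in H. destruct H as [H|H].
    + intros x Hx. right. exact (IH s H x Hx).
    + apply in_map_iff in H. destruct H as [t [<- Ht]].
      intros x [<-|Hx]; [left; auto|right; exact (IH t Ht x Hx)].
Qed.

Lemma sublists_inj {G : Type} (l : list G) : NoDup l ->
  forall s1 s2, In s1 (sublists l) -> In s2 (sublists l) ->
  (forall x, In x s1 <-> In x s2) -> s1 = s2.
Proof.
  induction l as [|a l IH]; simpl; intros Hnd s1 s2 H1 H2 Hx.
  - destruct H1 as [<-|[]]; destruct H2 as [<-|[]]; auto.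
  - inversion Hnd as [|? ? Hna Hnd']; subst.
    apply in_app_or in H1; apply in_app_or in H2.
    destruct H1 as [H1|H1]; destruct H2 as [H2|H2].
    + apply IH; auto.
    + apply in_map_iff in H2. destruct H2 as [t [<- Ht]].
      exfalso. apply Hna, (sublists_incl l s1 H1), Hx. left; auto.
    + apply in_map_iff in H1. destruct H1 as [t [<- Ht]].
      exfalso. apply Hna, (sublists_incl l s2 H2), Hx. left; auto.
    + apply in_map_iff in H1. destruct H1 as [t1 [<- Ht1]].
      apply in_map_iff in H2. destruct H2 as [t2 [<- Ht2]].
      assert (Ha1 : ~ In a t1) by (intro; apply Hna, (sublists_incl l t1 Ht1); auto).
      assert (Ha2 : ~ In a t2) by (intro; apply Hna, (sublists_incl l t2 Ht2); auto).
      f_equal. apply IH; auto. intro x. split; intro Hin.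
      * destruct (proj1 (Hx x) (or_intror Hin)); [subst; contradiction|auto].
      * destruct (proj2 (Hx x) (or_intror Hin)); [subst; contradiction|auto].
Qed.

Lemma sublists_NoDup {G : Type} (l : list G) : NoDup l -> NoDup (sublists l).
Proof.
  induction l as [|a l IH]; simpl; intro Hnd.
  - constructor; [intros []|constructor].
  - inversion Hnd as [|? ? Hna Hnd']; subst. apply NoDup_app.
    + auto.
    + apply Injective_map_NoDup; [intros x y H; inversion H; auto|auto].
    + intros s H1 H2. apply in_map_iff in H2. destruct H2 as [t [<- Ht]].
      apply Hna, (sublists_incl l _ H1). left; auto.
Qed.

Lemma NoDup_map_pred_of_sublists {G : Type} (l : list G) (q : list G -> bool) :
  NoDup l -> NoDup (map pred_of (filter q (sublists l))).
Proof.
  intro Hnd. apply NoDup_map_NoDup_ForallPairs.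
  - intros s1 s2 H1 H2 Heq. apply filter_In in H1. apply filter_In in H2.
    apply (sublists_inj l Hnd); try tauto.
    intro x. change (pred_of s1 x <-> pred_of s2 x). rewrite Heq. tauto.
  - apply NoDup_filter, sublists_NoDup, Hnd.
Qed.

Section GraphDistance.
Variables (G : Type) (E : G -> G -> Prop) (d : G -> G -> nat).
Hypothesis Hd : is_graph_distance E d.

Lemma walk_app x y z a b : walk E x y a -> walk E y z b -> walk E x z (a + b).
Proof. induction 1; intros; simpl; auto. econstructor; eauto. Qed.

Lemma walk_rev x y n : walk E x y n -> walk E y x n.
Proof.
  destruct Hd as (Hsym & _). induction 1; [constructor|].
  replace (S n) with (n + 1)%nat by lia. eapply walk_app; eauto.
  econstructor; [apply Hsym; eauto|constructor].
Qed.

Lemma walk_split a : forall b x z, walk E x z (a + b) -> exists y, walk E x y a /\ walk E y z b.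
Proof.
  induction a as [|a IH]; simpl; intros b x z H.
  - exists x; split; [constructor|auto].
  - inversion H as [|? y ? ? Hxy Hyz]; subst. destruct (IH b y z Hyz) as [w [Hyw Hwz]].
    exists w; split; auto. econstructor; eauto.
Qed.

Lemma dist_le_walk x y n : walk E x y n -> (d x y <= n)%nat.
Proof. destruct Hd as (_ & _ & Hgeo). apply (proj2 (Hgeo x y)). Qed.

Lemma dist_walk x y : walk E x y (d x y).
Proof. destruct Hd as (_ & _ & Hgeo). apply Hgeo. Qed.

Lemma dist_refl x : d x x = 0%nat.
Proof. assert (H := dist_le_walk x x 0 (walk0 E x)). lia. Qed.

Lemma dist_eq0 x y : d x y = 0%nat -> x = y.
Proof. intro H. assert (W := dist_walk x y). rewrite H in W. inversion W; auto. Qed.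

Lemma dist_sym x y : d x y = d y x.
Proof.
  assert (H1 := dist_le_walk _ _ _ (walk_rev _ _ _ (dist_walk x y))).
  assert (H2 := dist_le_walk _ _ _ (walk_rev _ _ _ (dist_walk y x))). lia.
Qed.

Lemma dist_bounded_on (l : list G) : exists N, forall a b, In a l -> In b l -> (d a b <= N)%nat.
Proof.
  exists (list_max (map (fun p => d (fst p) (snd p)) (list_prod l l))).
  intros a b Ha Hb. set (ds := map (fun p => d (fst p) (snd p)) (list_prod l l)).
  assert (Hmax := proj1 (list_max_le ds (list_max ds)) (Nat.le_refl _)).
  rewrite Forall_forall in Hmax. apply (Hmax (d a b)).
  apply in_map_iff. exists (a, b). split; auto. apply in_prod; auto.
Qed.

End GraphDistance.

(** * Layers of [X] and pairs leaving the collar *)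

Lemma has_card_unique {G : Type} (S : G -> Prop) a b : has_card S a -> has_card S b -> a = b.
Proof.
  intros [l1 [N1 [H1 L1]]] [l2 [N2 [H2 L2]]].
  assert (length l1 <= length l2)%nat
    by (apply NoDup_incl_length; auto; intros x Hx; apply H2, H1, Hx).
  assert (length l2 <= length l1)%nat
    by (apply NoDup_incl_length; auto; intros x Hx; apply H1, H2, Hx).
  lia.
Qed.

Definition deep_pair {G : Type} (d : G -> G -> nat) (X : G -> Prop) (rho : nat) (a b : G) :=
  X a /\ ~ inner d X rho a /\ ~ X b.

Definition far_pair {G : Type} (d : G -> G -> nat) (X : G -> Prop) (rho : nat) (a b : G) :=
  X a /\ ~ X b /\ ~ outer d X rho b.

Section Layers.
Variables (G : Type) (E : G -> G -> Prop) (d : G -> G -> nat).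
Hypothesis Hd : is_graph_distance E d.
Variables (X : G -> Prop) (rho : nat).

Lemma layer_in n x : (1 <= n)%nat -> layer d X n x -> X x.
Proof.
  intros Hn [_ Hl]. apply NNPP; intro Hx. apply Hl. exists x. split; auto.
  rewrite (dist_refl _ _ _ Hd). lia.
Qed.

Lemma exists_min_layer a b : X a -> ~ X b ->
  exists m, (1 <= m)%nat /\ layer d X m a /\ forall n, inner d X n a -> (m <= n)%nat.
Proof.
  intros Xa Xb.
  destruct (dec_inh_nat_subset_has_unique_least_element (fun n => inner d X n a))
    as [m [[Hm Hmin] _]].
  { intro n; apply classic. }
  { exists (d a b), b. split; auto. }
  assert (m <> 0%nat).
  { intro; subst. destruct Hm as [y [Hy Hy0]].
    assert (a = y) by (apply (dist_eq0 _ _ _ Hd); lia). subst. contradiction. }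
  exists m. split; [lia|]. split; auto. split; auto.
  intro Hi. apply Hmin in Hi. lia.
Qed.

(* A geodesic from [a] to [w] leaves [X] at least [rho] steps before [w]. *)
Lemma far_point_dist a w m : X a -> ~ X w -> ~ outer d X rho w ->
  (forall n, inner d X n a -> (m <= n)%nat) -> (m + rho <= d a w)%nat.
Proof.
  intros Xa Xw Hout Hmin.
  destruct (Nat.le_gt_cases (d a w) rho) as [Hle|Hlt].
  { exfalso. apply Hout. exists a. split; auto. rewrite (dist_sym _ _ _ Hd). auto. }
  assert (W := dist_walk _ _ _ Hd a w).
  replace (d a w) with ((d a w - rho) + rho)%nat in W by lia.
  destruct (walk_split _ _ _ _ _ _ W) as [p [W1 W2]].
  destruct (classic (X p)) as [Xp|Xp].
  { exfalso. apply Hout. exists p. split; auto.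
    rewrite (dist_sym _ _ _ Hd). apply (dist_le_walk _ _ _ Hd _ _ _ W2). }
  assert (Hinner : inner d X (d a w - rho) a).
  { exists p. split; auto. apply (dist_le_walk _ _ _ Hd _ _ _ W1). }
  apply Hmin in Hinner. lia.
Qed.

Lemma deep_pair_layer a b : deep_pair d X rho a b ->
  exists k, layer d X (k + rho + 1) a /\
    forall b', deep_pair d X rho a b' -> (k + rho + 1 <= d a b')%nat.
Proof.
  intros (Xa & Ha & Xb). destruct (exists_min_layer a b Xa Xb) as (m & Hm & Hlay & Hmin).
  assert (Hmr : (rho + 1 <= m)%nat).
  { destruct (Nat.le_gt_cases (rho + 1) m); auto. exfalso. apply Ha.
    destruct Hlay as [[y [Hy Hdy]] _]. exists y. split; auto. lia. }
  exists (m - rho - 1)%nat. replace (m - rho - 1 + rho + 1)%nat with m by lia.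
  split; auto. intros b' (_ & _ & Xb'). apply Hmin. exists b'. split; auto.
Qed.

Lemma far_pair_layer a b : far_pair d X rho a b ->
  exists k, layer d X (k + 1) a /\
    forall b', far_pair d X rho a b' -> (k + rho + 1 <= d a b')%nat.
Proof.
  intros (Xa & Xb & _). destruct (exists_min_layer a b Xa Xb) as (m & Hm & Hlay & Hmin).
  exists (m - 1)%nat. replace (m - 1 + 1)%nat with m by lia.
  split; auto. intros b' (_ & Xb' & Hb').
  assert (H := far_point_dist a b' m Xa Xb' Hb' Hmin). lia.
Qed.

Lemma not_in_collar_pair (Z : G -> Prop) :
  (exists u, Z u /\ X u) -> (exists v, Z v /\ ~ X v) ->
  ~ (forall x, Z x -> bdryR d X rho x) ->
  exists a b, Z a /\ Z b /\ (deep_pair d X rho a b \/ far_pair d X rho a b).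
Proof.
  intros [u [Zu Xu]] [v [Zv Xv]] Hout.
  apply not_all_ex_not in Hout. destruct Hout as [w Hw].
  apply imply_to_and in Hw. destruct Hw as [Zw Hw].
  assert (Hww : (d w w <= rho)%nat) by (rewrite (dist_refl _ _ _ Hd); lia).
  destruct (classic (X w)) as [Xw|Xw].
  - exists w, v. repeat split; auto. left. repeat split; auto.
    intro Hi. apply Hw. split; auto. exists w. split; auto.
  - exists u, w. repeat split; auto. right. repeat split; auto.
    intro Ho. apply Hw. split; auto. exists w. split; auto.
Qed.

Variables (lamL : list G) (cardBX : nat).
Hypothesis HlamND : NoDup lamL.
Hypothesis HXlam : forall x, X x -> In x lamL.
Hypothesis Hlayer : forall (n a b : nat), (1 <= n)%nat ->
  has_card (layer d X (S n)) a -> has_card (layer d X n) b -> (a <= b)%nat.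
Hypothesis HcardBX : has_card (bdry d X) cardBX.

Lemma layer_has_card n : (1 <= n)%nat ->
  has_card (layer d X n) (length (filter (fun x => decP (layer d X n x)) lamL)).
Proof.
  intro Hn. exists (filter (fun x => decP (layer d X n x)) lamL).
  split; [apply NoDup_filter; auto|]. split; [|reflexivity].
  intro x. rewrite filter_In, decP_iff. split; [tauto|].
  intro H; split; auto. apply HXlam, (layer_in n x Hn H).
Qed.

Lemma layer_card_le_bdry n : (1 <= n)%nat ->
  (length (filter (fun x => decP (layer d X n x)) lamL) <= cardBX)%nat.
Proof.
  intro Hn. induction n as [|n IH]; [lia|]. destruct n as [|n].
  - enough (Hc : has_card (bdry d X) (length (filter (fun x => decP (layer d X 1 x)) lamL)))
      by (rewrite (has_card_unique _ _ _ Hc HcardBX); lia).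
    destruct (layer_has_card 1 (le_n 1)) as [l [N [Hl L]]].
    exists l. split; auto. split; auto. intro x. rewrite Hl.
    split.
    + intros [H1 H2]. split; [apply (layer_in 1 x (le_n 1)); split; auto|]. split; auto.
    + intros [H1 [H2 H3]]. split; auto.
  - eapply Nat.le_trans; [|apply IH; lia].
    apply (Hlayer (S n)); [lia| |]; apply layer_has_card; lia.
Qed.

Lemma sumR_layer_le n c : (1 <= n)%nat -> 0 <= c ->
  sumR lamL (fun x => indic (layer d X n x) c) <= c * INR cardBX.
Proof.
  intros Hn Hc.
  rewrite (sumR_ext lamL _ (fun x => c * indic (layer d X n x) 1))
    by (intros; rewrite <- indic_scal, Rmult_1_r; reflexivity).
  rewrite sumR_scal, sumR_indic_one. apply Rmult_le_compat_l; auto.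
  apply le_INR, layer_card_le_bdry, Hn.
Qed.

Variables (F xi : R -> R) (normF zeta : R).
Hypothesis HFpos : forall r, 0 <= r -> 0 < F r.
Hypothesis Hxipos : forall r, 0 <= r -> 0 < xi r.
Hypothesis Hximon : forall a b, 0 <= a -> a <= b -> xi b <= xi a.
Hypothesis HnormF_ge0 : 0 <= normF.
Hypothesis HnormF : forall a, sumR lamL (fun b => F (INR (d a b))) <= normF.
Hypothesis Hzeta : infinite_sum (fun k => xi (INR (k + rho + 1))) zeta.

Lemma sumR_xi_le_zeta N : sumR (seq 0 (S N)) (fun k => xi (INR (k + rho + 1))) <= zeta.
Proof.
  rewrite sumR_seq. apply sum_incr; [exact Hzeta|].
  intro k. left. apply Hxipos, pos_INR.
Qed.

(* All points [b] paired with [a] are at distance at least [k + rho + 1], so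
   their weights [xi] are dominated by the single term [xi (k + rho + 1)]. *)
Lemma sumR_paired_Fxi_le (a : G) (T : G -> Prop) (Q : nat -> Prop) N :
  (forall b, In b lamL -> (d a b <= N)%nat) ->
  (forall b, In b lamL -> T b -> exists k, Q k /\
     forall b', In b' lamL -> T b' -> (k + rho + 1 <= d a b')%nat) ->
  sumR lamL (fun b => indic (T b) (F (INR (d a b)) * xi (INR (d a b))))
  <= normF * sumR (seq 0 (S N)) (fun k => indic (Q k) (xi (INR (k + rho + 1)))).
Proof.
  intros HN Hk.
  assert (Hsum_ge0 : 0 <= sumR (seq 0 (S N)) (fun k => indic (Q k) (xi (INR (k + rho + 1)))))
    by (apply sumR_ge0; intros; apply indic_ge0; left; apply Hxipos, pos_INR).
  destruct (classic (exists b, In b lamL /\ T b)) as [[b [Hb Tb]]|Hnone].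
  - destruct (Hk b Hb Tb) as [k [Qk Hdist]].
    set (c := xi (INR (k + rho + 1))).
    assert (Hc : 0 < c) by (apply Hxipos, pos_INR).
    apply Rle_trans with (sumR lamL (fun b => c * F (INR (d a b)))).
    { apply sumR_le. intros b' Hb'.
      assert (HF : 0 < F (INR (d a b'))) by (apply HFpos, pos_INR).
      destruct (classic (T b')) as [Tb'|Tb'].
      - rewrite indic_true by auto.
        assert (xi (INR (d a b')) <= c)
          by (apply Hximon; [apply pos_INR|apply le_INR, Hdist; auto]).
        rewrite Rmult_comm. apply Rmult_le_compat_r; lra.
      - rewrite indic_false by auto. apply Rmult_le_pos; lra. }
    rewrite sumR_scal.
    assert (Hck : c <= sumR (seq 0 (S N)) (fun k => indic (Q k) (xi (INR (k + rho + 1))))).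
    { rewrite <- (indic_true (Q k) c Qk).
      apply (sumR_ge_term _ (fun k => indic (Q k) (xi (INR (k + rho + 1))))).
      - intros; apply indic_ge0; left; apply Hxipos, pos_INR.
      - apply in_seq. specialize (Hdist b Hb Tb). specialize (HN b Hb). lia. }
    apply Rle_trans with (c * normF); [apply Rmult_le_compat_l; [lra|apply HnormF]|].
    rewrite Rmult_comm. apply Rmult_le_compat_l; auto.
  - rewrite sumR_zero; [apply Rmult_le_pos; auto|].
    intros b Hb. apply indic_false. intro; apply Hnone; eauto.
Qed.

Lemma sumR_pair_class_le (T : G -> G -> Prop) (c : nat -> nat) :
  (forall k, (1 <= c k)%nat) ->
  (forall a b, T a b -> exists k, layer d X (c k) a /\
     forall b', T a b' -> (k + rho + 1 <= d a b')%nat) ->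
  sumR lamL (fun a => sumR lamL (fun b => indic (T a b) (F (INR (d a b)) * xi (INR (d a b)))))
  <= normF * (INR cardBX * zeta).
Proof.
  intros Hc Hlay. destruct (dist_bounded_on G d lamL) as [N HN].
  apply Rle_trans with
    (normF * sumR lamL (fun a => sumR (seq 0 (S N))
       (fun k => indic (layer d X (c k) a) (xi (INR (k + rho + 1)))))).
  { rewrite <- sumR_scal. apply sumR_le. intros a Ha.
    apply sumR_paired_Fxi_le; [intros; apply HN; auto|].
    intros b _ Tb. destruct (Hlay a b Tb) as [k [Hk Hdist]]. exists k. split; auto. }
  apply Rmult_le_compat_l; auto. rewrite sumR_swap.
  apply Rle_trans with (sumR (seq 0 (S N)) (fun k => INR cardBX * xi (INR (k + rho + 1)))).
  - apply sumR_le. intros k _. rewrite Rmult_comm.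
    apply sumR_layer_le; auto. left. apply Hxipos, pos_INR.
  - rewrite sumR_scal. apply Rmult_le_compat_l; [apply pos_INR|apply sumR_xi_le_zeta].
Qed.

Lemma sumR_collar_pairs_le :
  sumR lamL (fun a => sumR lamL (fun b =>
    indic (deep_pair d X rho a b) (F (INR (d a b)) * xi (INR (d a b))))) +
  sumR lamL (fun a => sumR lamL (fun b =>
    indic (far_pair d X rho a b) (F (INR (d a b)) * xi (INR (d a b)))))
  <= 2 * INR cardBX * normF * zeta.
Proof.
  assert (Hdeep := sumR_pair_class_le (deep_pair d X rho) (fun k => (k + rho + 1)%nat)
                     ltac:(intro; cbv beta; lia) deep_pair_layer).
  assert (Hfar := sumR_pair_class_le (far_pair d X rho) (fun k => (k + 1)%nat)
                    ltac:(intro; cbv beta; lia) far_pair_layer).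
  lra.
Qed.

End Layers.

(** * The norms [‖F‖] and [‖Ψ‖_ξ] *)

Lemma is_lub_inhabited (S : R -> Prop) m : is_lub S m -> exists s, S s.
Proof.
  intros [_ Hleast]. apply NNPP; intro Hempty.
  assert (m <= m - 1); [|lra].
  apply Hleast. intros s Hs. exfalso; eauto.
Qed.

Section Norms.
Variables (G : Type) (d : G -> G -> nat) (F xi : R -> R).

Lemma F_sums_lub_ge0 normF : is_lub (F_sums d F) normF -> 0 <= normF.
Proof.
  intros Hlub. destruct (is_lub_inhabited _ _ Hlub) as [_ [x _]].
  apply (proj1 Hlub). exists x, nil. split; [constructor|reflexivity].
Qed.

Lemma F_sums_lub_sumR_le normF (l : list G) a :
  is_lub (F_sums d F) normF -> NoDup l -> sumR l (fun b => F (INR (d a b))) <= normF.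
Proof. intros [Hub _] Hnd. apply Hub. exists a, l. split; auto. Qed.

Variable psisup : (G -> Prop) -> R.

Lemma Psi_sums_lub_ge0 normPsi : is_lub (Psi_sums d F xi psisup) normPsi -> 0 <= normPsi.
Proof.
  intros Hlub. destruct (is_lub_inhabited _ _ Hlub) as [_ [x _]].
  apply (proj1 Hlub). exists x, x, nil.
  split; [constructor|]. split; [intros _ []|]. simpl. unfold Rdiv. ring.
Qed.

Lemma sumR_sublists_through_pair_le normPsi (lamL : list G) (P : list G -> Prop) a b :
  NoDup lamL -> (forall r, 0 <= r -> 0 < F r) -> (forall r, 0 <= r -> 0 < xi r) ->
  is_lub (Psi_sums d F xi psisup) normPsi ->
  sumR (sublists lamL) (fun s => indic (P s /\ In a s /\ In b s) (psisup (pred_of s)))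
  <= normPsi * (F (INR (d a b)) * xi (INR (d a b))).
Proof.
  intros Hnd HFpos Hxipos [Hub _].
  assert (Hw : 0 < F (INR (d a b)) * xi (INR (d a b)))
    by (apply Rmult_lt_0_compat; [apply HFpos|apply Hxipos]; apply pos_INR).
  rewrite <- sumR_filter.
  set (L := filter _ (sublists lamL)).
  assert (Hdiv : sumR L (fun s => psisup (pred_of s)) / (F (INR (d a b)) * xi (INR (d a b)))
                 <= normPsi).
  { apply Hub. exists a, b, L. split; [apply NoDup_map_pred_of_sublists, Hnd|]. split.
    - intros l Hl. apply filter_In in Hl. destruct Hl as [_ Hl].
      apply (proj1 (decP_iff _)) in Hl. destruct Hl as (_ & Ha & Hb). auto.
    - reflexivity. }
  apply (Rmult_le_compat_r (F (INR (d a b)) * xi (INR (d a b)))) in Hdiv; [|lra].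
  unfold Rdiv in Hdiv. rewrite Rmult_assoc, Rinv_l in Hdiv; lra.
Qed.

End Norms.

Theorem mainTheorem2
  (G : Type) (Gcount : countable G) (E : G -> G -> Prop) (d : G -> G -> nat)
  (Hd : is_graph_distance E d)
  (F : R -> R) (HFpos : forall r, 0 <= r -> 0 < F r)
  (normF : R) (HnormF : is_lub (F_sums d F) normF)
  (HCF : bound (CF_sums d F))
  (xi : R -> R) (Hxipos : forall r, 0 <= r -> 0 < xi r)
  (Hximon : forall a b, 0 <= a -> a <= b -> xi b <= xi a)
  (Hximul : forall a b, 0 <= a -> 0 <= b -> xi a * xi b <= xi (a + b))
  (Hxidec : forall (n : nat) (eps : R), 0 < eps ->
             exists M, forall r, M <= r -> Rabs (xi r * r ^ n) < eps)
  (T : R) (HT : 0 < T) (A : NormedAbGroup) (Psi : (G -> Prop) -> R -> A)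
  (Hcont : forall (l : list G) (t : R), -T <= t <= T ->
             forall eps, 0 < eps -> exists delta, 0 < delta /\
               forall s, -T <= s <= T -> Rabs (s - t) < delta ->
                 ng_norm A (ng_add A (Psi (pred_of l) s) (ng_opp A (Psi (pred_of l) t))) < eps)
  (psisup : (G -> Prop) -> R)
  (Hpsisup : forall l : list G, is_lub (Psi_vals A T Psi (pred_of l)) (psisup (pred_of l)))
  (normPsi : R) (HnormPsi : is_lub (Psi_sums d F xi psisup) normPsi)
  (xL : list G)
  (Hlayer : forall (n a b : nat), (1 <= n)%nat ->
              has_card (layer d (pred_of xL) (S n)) a ->
              has_card (layer d (pred_of xL) n) b -> (a <= b)%nat)
  (Rn : nat) (HR : (1 <= Rn)%nat)
  (lamL : list G) (HlamND : NoDup lamL)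
  (Hlam : forall x, outer d (pred_of xL) Rn x -> In x lamL)
  (zeta_rho : R)
  (Hzeta : infinite_sum (fun k => xi (INR (k + Nat.div2 Rn + 1))) zeta_rho)
  (cardBX : nat) (HcardBX : has_card (bdry d (pred_of xL)) cardBX) :
  let X := pred_of xL in
  let Lam := pred_of lamL in
  let rho := Nat.div2 Rn in
  let crossing := fun Z : G -> Prop =>
        (exists x, Z x /\ X x) /\ (exists x, Z x /\ Lam x /\ ~ X x) in
  let K := fun t => ng_opp A (sum_subsets A lamL crossing (fun Z => Psi Z t)) in
  let Ssurf := fun t => sum_subsets A lamL
        (fun Y => (forall x, Y x -> bdryR d X rho x) /\ crossing Y) (fun Z => Psi Z t) in
  forall r, -T <= r <= T ->
    ng_norm A (ng_add A (K r) (Ssurf r))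
      <= 2 * INR cardBX * normPsi * normF * zeta_rho.
Proof.
  intros X Lam rho crossing K Ssurf r Hr.
  assert (norm0 := ng_norm0_of_continuous A (Psi (pred_of nil)) (fun s => -T <= s <= T) 0
                     ltac:(lra) (Hcont nil 0 ltac:(lra))).
  assert (HnormF_ge0 := F_sums_lub_ge0 G d F normF HnormF).
  assert (HnormPsi_ge0 := Psi_sums_lub_ge0 G d F xi psisup normPsi HnormPsi).
  assert (HXlam : forall x, X x -> In x lamL).
  { intros x Hx. apply Hlam. exists x. split; auto. rewrite (dist_refl _ _ _ Hd). lia. }
  assert (Hpsi : forall s, ng_norm A (Psi (pred_of s) r) <= psisup (pred_of s))
    by (intro s; apply (proj1 (Hpsisup s)); exists r; split; auto).
  assert (Hpsi0 : forall s, 0 <= psisup (pred_of s))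
    by (intro s; eapply Rle_trans; [apply ng_norm_ge0|apply Hpsi]).
  set (leaves_collar := fun s : list G =>
         crossing (pred_of s) /\ ~ (forall x, pred_of s x -> bdryR d X rho x)).
  apply Rle_trans with
    (sumR (sublists lamL) (fun s => indic (leaves_collar s) (psisup (pred_of s)))).
  { eapply Rle_trans; [apply ng_norm_sum_diff_le, norm0|].
    apply sumR_le; intros s _; apply indic_le; auto. }
  eapply Rle_trans.
  { apply (sumR_le_by_pair_cover _ lamL _ (fun a s => In a s)
      (deep_pair d X rho) (far_pair d X rho) _
      (fun a b => normPsi * (F (INR (d a b)) * xi (INR (d a b))))); auto.
    - intros a b. apply Rmult_le_pos; [|left; apply Rmult_lt_0_compat]; auto using pos_INR.
    - intros s Hs [[[u [Zu Xu]] [v [Zv [_ Xv]]]] Hcol].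
      destruct (not_in_collar_pair G E d Hd X rho (pred_of s))
        as (a & b & Za & Zb & Hab); eauto.
      exists a, b. repeat split; auto; apply (sublists_incl lamL s Hs); auto.
    - intros a b. apply sumR_sublists_through_pair_le; auto. }
  rewrite !sumR2_indic_scal, <- Rmult_plus_distr_l.
  assert (Hpairs := sumR_collar_pairs_le G E d Hd X rho lamL cardBX HlamND HXlam Hlayer
    HcardBX F xi normF zeta_rho HFpos Hxipos Hximon HnormF_ge0
    (fun a => F_sums_lub_sumR_le G d F normF lamL a HnormF HlamND) Hzeta).
  apply (Rmult_le_compat_l normPsi) in Hpairs; auto. lra.
Qed.
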